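(* Let $\mathbb{F}$ be an algebraically closed field of characteristic different from $2$. There is no finite-dimensional nilpotent Lie algebra $L$ over $\mathbb{F}$ with $\dim L^{2}=3$, $\dim Z(L)=1$ and $s(L)=5$ such that $L/Z(L)\cong L_{5,8}\oplus A(2)$.
   Context: Schur multiplier: if $L\cong F/R$ with $F$ a free Lie algebra, then $\mathcal{M}(L)\cong (R\cap F^{2})/[R,F]$. For a non-abelian nilpotent Lie algebra $L$ of dimension $n$, $s(L)\ge0$ is defined by $\dim\mathcal{M}(L)=\frac12(n-1)(n-2)+1-s(L)$. $A(2)$ is the $2$-dimensional abelian Lie algebra. $L_{5,8}$ has basis $x_1,\dots,x_5$ with nonzero brackets $[x_1,x_2]=x_4$, $[x_1,x_3]=x_5$. *)

From HB Require Import structures.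
From mathcomp Require Import all_boot all_order all_algebra.
Set Implicit Arguments.
Unset Strict Implicit.
Unset Printing Implicit Defensive.
Import GRing.Theory.
Local Open Scope ring_scope.

Section LieDefs.
Variables (F : fieldType) (V : vectType F) (br : V -> V -> V).

Definition is_lie_bracket : Prop :=
  [/\ (forall (a : F) (x y z : V), br (a *: x + y) z = a *: br x z + br y z),
      (forall (a : F) (x y z : V), br x (a *: y + z) = a *: br x y + br x z),
      (forall x : V, br x x = 0) &
      (forall x y z : V, br x (br y z) + br y (br z x) + br z (br x y) = 0)].

(* [U, W] : the subspace spanned by all brackets [u, w], u in U, w in W
   (by bilinearity it suffices to take u, w in bases of U, W). *)
Definition brv (U W : {vspace V}) : {vspace V} :=
  (<< [seq br u w | u <- vbasis U, w <- vbasis W] >>)%VS.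

Definition derivedL : {vspace V} := brv fullv fullv.

(* lower central series: lcs k = L^(k+1); L^1 = L, L^(k+1) = [L, L^k] *)
Definition lcs (k : nat) : {vspace V} := iter k (brv fullv) fullv.

Definition nilpotentL : Prop := exists k, lcs k = 0%VS.

Definition centerL : {vspace V} :=
  (\bigcap_(i < \dim {:V}) lker (linfun (fun x => br x (tnth (vbasis fullv) i))))%VS.

(* ---- Schur multiplier via the Chevalley-Eilenberg complex ----
   M(L) = H_2(L) = ker (d2 : /\^2 L -> L) / im (d3 : /\^3 L -> /\^2 L).
   /\^2 L is realised inside n x n matrices (n = dim L) by
   x /\ y |-> (x_i y_j - x_j y_i)_{i,j} (coordinates in vbasis fullv). *)
Definition dimL : nat := \dim {:V}.
Definition bL : dimL.-tuple V := vbasis fullv.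

Definition wedge (x y : V) : 'M[F]_dimL :=
  \matrix_(i, j) (coord bL i x * coord bL j y - coord bL j x * coord bL i y).

Definition wedge2 : {vspace 'M[F]_dimL} :=
  (<< [seq wedge u w | u <- bL, w <- bL] >>)%VS.

(* d2 (x /\ y) = [x, y] *)
Definition d2 (A : 'M[F]_dimL) : V :=
  \sum_(i < dimL) \sum_(j < dimL | (i < j)%N) A i j *: br (tnth bL i) (tnth bL j).

Definition cycles2 : {vspace 'M[F]_dimL} := (wedge2 :&: lker (linfun d2))%VS.

Definition boundaries2 : {vspace 'M[F]_dimL} :=
  (<< flatten [seq [seq (wedge (br x y) z + wedge (br y z) x + wedge (br z x) y)%R
                   | y <- bL, z <- bL] | x <- bL] >>)%VS.

Definition schur_dim : nat := (\dim cycles2 - \dim boundaries2)%N.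

Definition s_inv : int :=
  ((((dimL.-1 * dimL.-2) %/ 2) + 1)%N)%:Z - (schur_dim)%:Z.

End LieDefs.

(* L_{5,8} (+) A(2) on F^7: basis x1..x7 = coordinates 0..6,
   nonzero brackets [x1,x2] = x4, [x1,x3] = x5 (and antisymmetric ones). *)
Definition br_L58A2 (F : fieldType) (u v : 'rV[F]_7) : 'rV[F]_7 :=
  \row_(k < 7)
    (if (k == 3 :> nat) then u 0 (inord 0) * v 0 (inord 1) - u 0 (inord 1) * v 0 (inord 0)
     else if (k == 4 :> nat) then u 0 (inord 0) * v 0 (inord 2) - u 0 (inord 2) * v 0 (inord 0)
     else 0).

(* L / Z(L) is isomorphic to L_{5,8} (+) A(2): by the first isomorphism
   theorem, there is a surjective Lie algebra homomorphism L -> L_{5,8} (+) A(2)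
   with kernel Z(L). *)
Definition quot_center_iso_L58A2 (F : fieldType) (V : vectType F)
    (br : V -> V -> V) : Prop :=
  exists f : V -> 'rV[F]_7,
    [/\ (forall (a : F) (x y : V), f (a *: x + y) = a *: f x + f y),
        (forall w : 'rV[F]_7, exists x, f x = w),
        (forall x : V, f x = 0 <-> x \in centerL br) &
        (forall x y : V, f (br x y) = br_L58A2 (f x) (f y))].

(* Since d2 maps /\^2 L onto L^2, dim ker d2 <= 28 - 3 = 25.  The map
   /\^2 L -> /\^2 (L/Z(L)) induced by the quotient sends im d3 onto a space
   containing the six independent boundaries x4^x3 - x5^x2, x4^x5, x4^x6,
   x4^x7, x5^x6, x5^x7 of L_{5,8} (+) A(2); its kernel meets im d3 in at least
   the three independent boundaries d(x6^xj^xk), [x1,x3]^z and [x1,x2]^z,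
   where z = [x6,xj] is a nonzero central element.  So dim im d3 >= 9 and
   dim M(L) <= 16, while s(L) = 5 means dim M(L) = 17. *)

From HB Require Import structures.
From mathcomp Require Import all_boot all_order all_algebra.
From mathcomp Require Import ring zify.
Set Implicit Arguments. Unset Strict Implicit. Unset Printing Implicit Defensive.
Import GRing.Theory.
Local Open Scope ring_scope.

Lemma linfun_linE (K : fieldType) (aT rT : vectType K) (f : aT -> rT) :
  linear f -> linfun f =1 f.
Proof. by move=> lin_f; exact: lfunE (HB.pack f (GRing.isLinear.Build K aT rT _ f lin_f)). Qed.

Lemma map_free (K : fieldType) (aT rT : vectType K) (f : 'Hom(aT, rT)) (X : seq aT) :
  free (map f X) -> free X.
Proof.
rewrite /free size_map -limg_span => /eqP dimfX.
have := limg_ker_dim f <<X>>; rewrite eqn_leq dim_span -{1}dimfX; lia.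
Qed.

Lemma notin_span_scalar (K : fieldType) (M : vectType K) (psi : M -> K) (X : seq M) x :
  scalar psi -> {in X, forall y, psi y = 0} -> psi x != 0 -> x \notin <<X>>%VS.
Proof.
move=> lin_psi psiX; have psiE := linfun_linE (lin_psi : linear (psi : M -> K^o)).
have sXker : (<<X>> <= lker (linfun (psi : M -> K^o)))%VS.
  by apply/span_subvP => y /psiX; rewrite memv_ker psiE => ->.
by apply: contraNN => /(subvP sXker); rewrite memv_ker psiE.
Qed.

Lemma free_triangular (K : fieldType) (M : vectType K) (X : seq M) (psi : nat -> M -> K) :
  (forall i, scalar (psi i)) ->
  (forall i, (i < size X)%N -> psi i X`_i != 0) ->
  (forall i j, (i < j < size X)%N -> psi i X`_j = 0) -> free X.
Proof.
elim: X psi => [|x X IH] psi lin_psi diag_psi upper_psi; first exact: nil_free.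
rewrite free_cons; apply/andP; split.
  apply: notin_span_scalar (diag_psi 0%N isT) => // y /(nthP 0) [j jX <-].
  exact: (upper_psi 0%N j.+1).
apply: (IH (fun i => psi i.+1)) => // [i iX|i j ijX]; first exact: diag_psi.
exact: (upper_psi i.+1 j.+1).
Qed.

Section LieAlgebra.
Variables (F : fieldType) (V : vectType F) (br : V -> V -> V).
Hypothesis lie_br : is_lie_bracket br.

Local Notation n := (dimL V).
Local Notation b := (bL V).
Local Notation crd := (passmx.rVof b).

Lemma linear_vbasisE (M : vectType F) (g : V -> M) :
  linear g -> forall x, g x = \sum_(i < n) coord b i x *: g b`_i.
Proof.
move=> lin_g x; rewrite -(linfun_linE lin_g) {1}(coord_vbasis (memvf x)) linear_sum.
by apply: eq_bigr => i _; rewrite linearZ /= (linfun_linE lin_g).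
Qed.

Lemma linear_vbasis_mem (M : vectType F) (g : V -> M) (U : {vspace M}) :
  linear g -> (forall i : 'I_n, g b`_i \in U) -> forall x, g x \in U.
Proof.
move=> lin_g gbU x; rewrite (linear_vbasisE lin_g).
by apply: memv_suml => i _; rewrite memvZ.
Qed.

Lemma br_linearl z : linear (br^~ z).
Proof. by case: lie_br => brL _ _ _ a x y; apply: brL. Qed.
Lemma br_linearr x : linear (br x).
Proof. by case: lie_br => _ brR _ _ a y z; apply: brR. Qed.

Lemma brDl z : {morph br^~ z : x y / x + y}.
Proof. by move=> x y; rewrite -!(linfun_linE (br_linearl z)) linearD. Qed.
Lemma brDr x : {morph br x : y z / y + z}.
Proof. by move=> y z; rewrite -!(linfun_linE (br_linearr x)) linearD. Qed.
Lemma brZr x a y : br x (a *: y) = a *: br x y.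
Proof. by rewrite -!(linfun_linE (br_linearr x)) linearZ. Qed.
Lemma br_sumr x I r (P : pred I) (g : I -> V) :
  br x (\sum_(i <- r | P i) g i) = \sum_(i <- r | P i) br x (g i).
Proof.
rewrite -(linfun_linE (br_linearr x)) linear_sum.
by apply: eq_bigr => i _; apply: linfun_linE (br_linearr x) _.
Qed.
Lemma brxx x : br x x = 0. Proof. by case: lie_br. Qed.

Lemma brC x y : br x y = - br y x.
Proof.
apply/eqP; rewrite -addr_eq0; have := brxx (x + y).
by rewrite brDl !brDr !brxx add0r addr0 => ->.
Qed.

Lemma br_vbasisE x y :
  br x y = \sum_(i < n) \sum_(j < n) (coord b i x * coord b j y) *: br b`_i b`_j.
Proof.
rewrite (linear_vbasisE (br_linearl y)); apply: eq_bigr => i _.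
rewrite (linear_vbasisE (br_linearr _)) scaler_sumr.
by apply: eq_bigr => j _; rewrite scalerA.
Qed.

Lemma centerP u : reflect (forall x, br u x = 0) (u \in centerL br).
Proof.
have kerE i : (u \in lker (linfun (fun x => br x (tnth b i)))) = (br u b`_i == 0).
  rewrite memv_ker linfun_linE; last exact: br_linearl.
  by rewrite (tnth_nth 0).
rewrite /centerL memvE; apply: (iffP subv_bigcapP) => [ubU x | u0 i _]; last first.
  by rewrite -memvE kerE u0.
apply/eqP; rewrite -memv0; apply: linear_vbasis_mem (br_linearr u) _ x => i.
by have := ubU i isT; rewrite -memvE kerE memv0.
Qed.

Lemma wedgeE (x y : V) : wedge x y = (crd x)^T *m crd y - (crd y)^T *m crd x.
Proof. by apply/matrixP => i j; rewrite !mxE !big_ord1 !mxE; ring. Qed.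

Lemma wedge_linearl (w : V) : linear (fun x : V => wedge x w).
Proof. by move=> a x y; apply/matrixP => i j; rewrite !mxE !linearP /=; ring. Qed.
Lemma wedge_linearr (x : V) : linear (wedge x).
Proof. by move=> a y w; apply/matrixP => i j; rewrite !mxE !linearP /=; ring. Qed.
Lemma wedge0l (w : V) : wedge 0 w = 0.
Proof. by apply/matrixP => i j; rewrite !mxE linear0; ring. Qed.
Lemma wedgeC (x y : V) : wedge x y = - wedge y x.
Proof. by apply/matrixP => i j; rewrite !mxE; ring. Qed.
Lemma wedgexx (x : V) : wedge x x = 0.
Proof. by apply/matrixP => i j; rewrite !mxE; ring. Qed.

Lemma d2_wedge x y : d2 br (wedge x y) = br x y.
Proof.
pose c i j := (coord b i x * coord b j y) *: br b`_i b`_j.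
have c_split i j :
    c i j = (if (i < j)%N then c i j else 0) + (if (j < i)%N then c i j else 0).
  case: ltngtP => [||/val_inj ->]; rewrite ?addr0 ?add0r //.
  by rewrite /c brxx scaler0.
have -> : br x y = \sum_(i < n) \sum_(j < n) (if (i < j)%N then c i j else 0)
                   + \sum_(i < n) \sum_(j < n) (if (j < i)%N then c i j else 0).
  rewrite br_vbasisE -big_split; apply: eq_bigr => i _.
  by rewrite -big_split; apply: eq_bigr => j _; apply: c_split.
rewrite [X in _ = _ + X]exchange_big -big_split /d2; apply: eq_bigr => i _.
rewrite -big_split big_mkcond /=; apply: eq_bigr => j _.
case: ifP => _; last by rewrite addr0.
by rewrite /c /wedge !mxE !(tnth_nth 0) (brC b`_j) scalerN scalerBl.
Qed.

Lemma d2_linear : linear (d2 br).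
Proof.
move=> a A B; rewrite /d2 scaler_sumr -big_split; apply: eq_bigr => i _.
rewrite scaler_sumr -big_split; apply: eq_bigr => j _.
by rewrite !mxE scalerDl scalerA.
Qed.

Lemma derivedL_sub_limg_d2 : (derivedL br <= linfun (d2 br) @: wedge2 V)%VS.
Proof.
apply/span_subvP => _ /allpairsP [[u w] /= [ub wb ->]].
rewrite -d2_wedge -(linfun_linE d2_linear); apply/memv_img/memv_span.
exact: allpairs_f.
Qed.

Lemma dim_wedge2 : (\dim (wedge2 V) <= 'C(n, 2))%N.
Proof.
set s := [seq wedge b`_i b`_j | i <- iota 0 n, j <- iota 0 i].
have -> : 'C(n, 2) = size s.
  rewrite size_allpairs_dep -bin2_sum sumnE big_map /index_iota subn0.
  by apply: eq_bigr => i _; rewrite size_iota.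
apply: leq_trans (dim_span s); apply: dimvS.
apply/span_subvP => _ /allpairsP [[u w] /= [/(nthP 0) [p pn <-] /(nthP 0) [q qn <-] ->]].
rewrite size_tuple in pn qn.
have wedge_s i j : (j < i < n)%N -> wedge b`_i b`_j \in <<s>>%VS.
  move=> /andP [ji i_n]; apply: memv_span.
  by apply: (allpairs_f_dep (fun i j => wedge b`_i b`_j)); rewrite mem_iota.
case: (ltngtP p q) => [pq|qp|->]; last by rewrite wedgexx mem0v.
  by rewrite wedgeC memvN wedge_s ?pq.
by rewrite wedge_s ?qp.
Qed.

Lemma schur_dim_le :
  (schur_dim br <= \dim (wedge2 V) - \dim (derivedL br) - \dim (boundaries2 br))%N.
Proof.
have := limg_ker_dim (linfun (d2 br)) (wedge2 V).
have := dimvS derivedL_sub_limg_d2; rewrite /schur_dim /cycles2.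
set cyc := \dim (_ :&: _); set img := \dim (_ @: _) => ? <-; lia.
Qed.

Definition d3 (x y w : V) : 'M[F]_n :=
  wedge (br x y) w + wedge (br y w) x + wedge (br w x) y.

Lemma d3_cycle x y w : d3 x y w = d3 y w x.
Proof. by rewrite /d3 [RHS]addrC !addrA. Qed.

Lemma d3_linear y w : linear (fun x => d3 x y w).
Proof.
move=> a x x'; rewrite /d3 br_linearl br_linearr wedge_linearl wedge_linearr.
by rewrite wedge_linearl !scalerDr [X in X + _ = _]addrACA [LHS]addrACA.
Qed.

Lemma d3_mem x y w : d3 x y w \in boundaries2 br.
Proof.
have d3b (i j k : 'I_n) : d3 b`_i b`_j b`_k \in boundaries2 br.
  have bi (l : 'I_n) : b`_l \in (b : seq V) by rewrite mem_nth ?size_tuple.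
  apply/memv_span/flatten_mapP; exists b`_i; first exact: bi.
  exact: (allpairs_f (fun y w => d3 b`_i y w)).
have d3x (j k : 'I_n) x' : d3 x' b`_j b`_k \in boundaries2 br.
  exact: linear_vbasis_mem (d3_linear _ _) _ _.
have d3xy (k : 'I_n) x' y' : d3 x' y' b`_k \in boundaries2 br.
  by rewrite d3_cycle; apply: linear_vbasis_mem (d3_linear _ _) _ _ => j; rewrite -d3_cycle.
by rewrite -d3_cycle; apply: linear_vbasis_mem (d3_linear _ _) _ _ => k; rewrite d3_cycle.
Qed.

Lemma d3_central x y z : z \in centerL br -> d3 x y z = wedge (br x y) z.
Proof.
by move=> /centerP zZ; rewrite /d3 [br y z]brC !zZ oppr0 !wedge0l !addr0.
Qed.

End LieAlgebra.

Lemma inord7_eq p q : (p < 7)%N -> (q < 7)%N -> (inord p == inord q :> 'I_7) = (p == q).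
Proof.
by move=> p7 q7; apply/eqP/eqP => [/(congr1 (@nat_of_ord 7))|->]; rewrite ?inordK.
Qed.

Section L58A2.
Variable F : fieldType.

Definition e7 (p : nat) : 'rV[F]_7 := delta_mx 0 (inord p).

Definition wedge7 (u v : 'rV[F]_7) : 'M[F]_7 := u^T *m v - v^T *m u.

Lemma e7_entry p q : (p < 7)%N -> (q < 7)%N -> e7 p 0 (inord q) = (p == q)%:R.
Proof. by move=> p7 q7; rewrite mxE eqxx /= inord7_eq // eq_sym. Qed.

Lemma wedge7Nl u v : wedge7 (- u) v = - wedge7 u v.
Proof. by rewrite /wedge7 linearN /= mulNmx mulmxN opprK opprB addrC. Qed.

Lemma br_L58A2_e p q : (p < 7)%N -> (q < 7)%N ->
  br_L58A2 (e7 p) (e7 q) =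
    ((p == 0)%N%:R * (q == 1)%N%:R - (p == 1)%N%:R * (q == 0)%N%:R) *: e7 3
  + ((p == 0)%N%:R * (q == 2)%N%:R - (p == 2)%N%:R * (q == 0)%N%:R) *: e7 4.
Proof.
move=> p7 q7; apply/rowP => m; have [k k7 ->] : exists2 k, (k < 7)%N & m = inord k.
  by exists m; rewrite ?inord_val.
rewrite mxE !e7_entry // inordK // !mxE /= !inord7_eq //.
by case: k k7 => [|[|[|[|[|[|[|]]]]]]] // _; rewrite /=; ring.
Qed.

Lemma wedge7_e p q :
  wedge7 (e7 p) (e7 q) = delta_mx (inord p) (inord q) - delta_mx (inord q) (inord p).
Proof. by rewrite /wedge7 /e7 !trmx_delta !mul_delta_mx. Qed.

Lemma wedge70l v : wedge7 0 v = 0.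
Proof. by rewrite /wedge7 trmx0 mul0mx mulmx0 subrr. Qed.
Lemma wedge70r u : wedge7 u 0 = 0.
Proof. by rewrite /wedge7 trmx0 mul0mx mulmx0 subrr. Qed.

End L58A2.

Section QuotientL58A2.
Variables (F : fieldType) (V : vectType F) (br : V -> V -> V).
Hypothesis lie_br : is_lie_bracket br.
Variable f : {linear V -> 'rV[F]_7}.
Hypotheses (f_surj : forall w, exists x, f x = w)
  (f_ker : forall x, f x = 0 <-> x \in centerL br)
  (f_br : forall x y, f (br x y) = br_L58A2 (f x) (f y)).

Local Notation n := (dimL V).
Local Notation b := (bL V).
Local Notation crd := (passmx.rVof b).

Lemma dimL_eq8 : \dim (centerL br) = 1%N -> n = 8%N.
Proof.
move=> dimZ; have kerf : lker (linfun f) = centerL br.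
  by apply/vspaceP => x; rewrite memv_ker lfunE; apply/eqP/idP => /f_ker.
have imgf : (linfun f @: fullv)%VS = fullv.
  apply/eqP; rewrite eqEsubv subvf; apply/subvP => w _.
  by have [x <-] := f_surj w; rewrite -lfunE memv_img ?memvf.
by have := limg_ker_dim (linfun f) fullv; rewrite capfv kerf imgf dimZ dimvf dim_matrix.
Qed.

Definition fmx : 'M[F]_(n, 7) := \matrix_i f b`_i.

Lemma mul_rVof_fmx x : crd x *m fmx = f x.
Proof.
rewrite mulmx_sum_row [RHS](linear_vbasisE (linearP f)).
by apply: eq_bigr => i _; rewrite rowK mxE.
Qed.

(* In the matrix model of /\^2 L used by [wedge2], [ext2f] is /\^2 f and
   [idxf] is id (x) f. *)
Definition ext2f : 'Hom('M[F]_n, 'M[F]_7) := linfun (fun A => fmx^T *m A *m fmx).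

Lemma ext2f_wedge x y : ext2f (wedge x y) = wedge7 (f x) (f y).
Proof.
rewrite linfun_linE; last first.
  by move=> a A B; rewrite mulmxDr mulmxDl -scalemxAr -scalemxAl.
by rewrite wedgeE mulmxBr mulmxBl !mulmxA -!(mulmxA _ _ fmx) -!trmx_mul !mul_rVof_fmx.
Qed.

Definition idxf : 'Hom('M[F]_n, 'M[F]_(n, 7)) := linfun (mulmxr fmx).

Lemma idxf_wedge x y : idxf (wedge x y) = (crd x)^T *m f y - (crd y)^T *m f x.
Proof. by rewrite lfunE /= wedgeE mulmxBl -!mulmxA !mul_rVof_fmx. Qed.

Lemma ext2f_d3 x y w :
  ext2f (d3 br x y w) =
    wedge7 (f (br x y)) (f w) + wedge7 (f (br y w)) (f x) + wedge7 (f (br w x)) (f y).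
Proof. by rewrite /d3 !linearD /= !ext2f_wedge. Qed.

Section Lifts.
Variable xl : nat -> V.
Hypothesis f_xl : forall p, f (xl p) = e7 F p.

Lemma center_xl u : (forall p, (p < 7)%N -> br u (xl p) = 0) -> u \in centerL br.
Proof.
move=> u0; apply/(centerP lie_br) => y.
set c := y - \sum_(p < 7) f y 0 p *: xl p.
have /(centerP lie_br) cZ : c \in centerL br.
  apply/f_ker; rewrite linearB linear_sum {1}(row_sum_delta (f y)) -sumrB big1 // => p _.
  by rewrite linearZ f_xl /e7 inord_val subrr.
rewrite -(subrK (\sum_(p < 7) f y 0 p *: xl p) y) -/c (brDr lie_br) (brC lie_br) cZ.
rewrite oppr0 add0r.
by rewrite (br_sumr lie_br) big1 // => p _; rewrite (brZr lie_br) u0 ?scaler0.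
Qed.

Lemma exists_br_xl5 : exists2 j, (j < 7)%N & br (xl 5) (xl j) != 0.
Proof.
have [/existsP [j bj]|] := boolP [exists j : 'I_7, br (xl 5) (xl j) != 0].
  by exists j.
rewrite negb_exists => /forallP bj0.
have : xl 5 \in centerL br.
  by apply: center_xl => p p7; have /negPn/eqP := bj0 (Ordinal p7).
by move/f_ker/rowP/(_ (inord 5)); rewrite f_xl !mxE !eqxx => /eqP; rewrite oner_eq0.
Qed.

Lemma f_br_xl p q : (p < 7)%N -> (q < 7)%N ->
  f (br (xl p) (xl q)) =
    ((p == 0)%N%:R * (q == 1)%N%:R - (p == 1)%N%:R * (q == 0)%N%:R) *: e7 F 3
  + ((p == 0)%N%:R * (q == 2)%N%:R - (p == 2)%N%:R * (q == 0)%N%:R) *: e7 F 4.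
Proof. by move=> p7 q7; rewrite f_br !f_xl br_L58A2_e. Qed.

Definition bd_quot : seq 'M[F]_n :=
  [:: d3 br (xl 0) (xl 1) (xl 2); d3 br (xl 0) (xl 1) (xl 4); d3 br (xl 0) (xl 1) (xl 5);
      d3 br (xl 0) (xl 1) (xl 6); d3 br (xl 0) (xl 2) (xl 5); d3 br (xl 0) (xl 2) (xl 6)].

Lemma ext2f_bd_quot : map ext2f bd_quot =
  [:: wedge7 (e7 F 3) (e7 F 2) - wedge7 (e7 F 4) (e7 F 1); wedge7 (e7 F 3) (e7 F 4);
      wedge7 (e7 F 3) (e7 F 5); wedge7 (e7 F 3) (e7 F 6); wedge7 (e7 F 4) (e7 F 5);
      wedge7 (e7 F 4) (e7 F 6)].
Proof.
congr [:: _; _; _; _; _; _]; rewrite ext2f_d3 !f_br_xl // !f_xl /=;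
by rewrite !(mulr0, mul0r, mulr1, subr0, sub0r, oppr0, scale0r, scale1r, scaleN1r,
            addr0, add0r, wedge70l, wedge7Nl).
Qed.

Lemma free_ext2f_bd_quot : free (map ext2f bd_quot).
Proof.
pose pivot := [:: (3, 2); (3, 4); (3, 5); (3, 6); (4, 5); (4, 6)]%N.
rewrite ext2f_bd_quot; apply: (free_triangular (psi := fun i (A : 'M[F]_7) =>
  A (inord (nth (0, 0) pivot i).1) (inord (nth (0, 0) pivot i).2)))%N.
- by move=> i a A B; rewrite !mxE.
- move=> [|[|[|[|[|[|i]]]]]] //= _;
  by rewrite !wedge7_e !mxE !inord7_eq //= !subr0 oner_eq0.
move=> [|[|[|[|[|i]]]]] [|[|[|[|[|[|j]]]]]]; rewrite ?andbF //= => _;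
by rewrite !wedge7_e !mxE !inord7_eq //= !subr0.
Qed.

Lemma idxf_d3_central x y w : f (br x y) = 0 -> f (br y w) = 0 -> f (br w x) = 0 ->
  idxf (d3 br x y w) =
    (crd (br x y))^T *m f w + (crd (br y w))^T *m f x + (crd (br w x))^T *m f y.
Proof.
by move=> fxy fyw fwx; rewrite /d3 !linearD /= !idxf_wedge fxy fyw fwx !mulmx0 !subr0.
Qed.

Section KernelBoundaries.
Variables j k : nat.
Hypotheses (j7 : (j < 7)%N) (k7 : (k < 7)%N).
Hypotheses (k3 : k != 3%N) (k4 : k != 4%N) (k5 : k != 5%N) (kj : k != j).
Hypothesis z_neq0 : br (xl 5) (xl j) != 0.
Hypothesis fjk : f (br (xl j) (xl k)) = 0.

Local Notation z := (br (xl 5) (xl j)).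

Lemma f_z : f z = 0.
Proof. by rewrite f_br_xl //= !mul0r subrr !scale0r addr0. Qed.

Lemma f_br_xl_k5 : f (br (xl k) (xl 5)) = 0.
Proof. by rewrite f_br_xl //= !mulr0 subrr !scale0r addr0. Qed.

Lemma z_center : z \in centerL br.
Proof. exact/f_ker/f_z. Qed.

Definition bd_center : seq 'M[F]_n :=
  [:: d3 br (xl 5) (xl j) (xl k); d3 br (xl 0) (xl 2) z; d3 br (xl 0) (xl 1) z].

Lemma bd_center_sub : (<<bd_center>> <= boundaries2 br :&: lker ext2f)%VS.
Proof.
apply/span_subvP => A; rewrite !inE => /or3P [] /eqP ->;
  rewrite memv_cap d3_mem //= memv_ker; apply/eqP.
- by rewrite ext2f_d3 f_z fjk f_br_xl_k5 !wedge70l !addr0.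
- by rewrite (d3_central lie_br) ?z_center // ext2f_wedge f_z wedge70r.
- by rewrite (d3_central lie_br) ?z_center // ext2f_wedge f_z wedge70r.
Qed.

Lemma idxf_bd_center : map idxf bd_center =
  [:: (crd z)^T *m e7 F k + (crd (br (xl j) (xl k)))^T *m e7 F 5
        + (crd (br (xl k) (xl 5)))^T *m e7 F j;
      - ((crd z)^T *m e7 F 4); - ((crd z)^T *m e7 F 3)].
Proof.
congr [:: _; _; _]; first by rewrite idxf_d3_central ?f_z ?f_br_xl_k5 // !f_xl.
all: rewrite (d3_central lie_br) ?z_center // idxf_wedge f_z mulmx0 sub0r f_br_xl //=.
all: by rewrite !(mulr0, mul0r, mulr1, subr0, oppr0, scale0r, scale1r, add0r, addr0).
Qed.

Lemma free_idxf_bd_center : free (map idxf bd_center).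
Proof.
have [i0 zi0] : exists i0, coord b i0 z != 0.
  apply/existsP; apply: contraR z_neq0 => /existsPn z0.
  rewrite (coord_vbasis (memvf z)) big1 // => i _.
  by have /negPn/eqP -> := z0 i; rewrite scale0r.
rewrite idxf_bd_center; apply: (free_triangular (psi := fun i (A : 'M[F]_(n, 7)) =>
  A i0 (inord (nth 0 [:: k; 4; 3] i))))%N.
- by move=> i a A B; rewrite !mxE.
- move=> [|[|[|i]]] //= _; rewrite !mxE !big_ord1 !mxE !inord7_eq // [ord0]ord1 !eqxx.
  + by rewrite (negbTE k5) (negbTE kj) !andbT !andbF !mulr1 !mulr0 !addr0.
  + by rewrite andbT mulr1 oppr_eq0.
  + by rewrite andbT mulr1 oppr_eq0.
move=> [|[|[|i]]] [|[|[|[|j']]]]; rewrite ?andbF //= => _;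
  rewrite !mxE !big_ord1 !mxE !inord7_eq // [ord0]ord1 !eqxx;
  by rewrite ?(negbTE k3) ?(negbTE k4) /= mulr0 oppr0.
Qed.

Lemma dim_boundaries_ker_ext2f : (3 <= \dim (boundaries2 br :&: lker ext2f))%N.
Proof.
apply: leq_trans (dimvS bd_center_sub).
by rewrite (eqnP (map_free free_idxf_bd_center)).
Qed.

End KernelBoundaries.

Lemma dim_boundaries_ge9 : (9 <= \dim (boundaries2 br))%N.
Proof.
have [j j7 zj] := exists_br_xl5.
have kerB : (3 <= \dim (boundaries2 br :&: lker ext2f))%N.
  case: (eqVneq j 6%N) zj => [-> zj|j6 zj].
    apply: (@dim_boundaries_ker_ext2f 6 1) => //.
    by rewrite f_br_xl //= !mul0r subrr !scale0r addr0.
  apply: (@dim_boundaries_ker_ext2f j 6) => //; first by rewrite eq_sym.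
  by rewrite f_br_xl //= !mulr0 subrr !scale0r addr0.
have imgB : (6 <= \dim (ext2f @: boundaries2 br))%N.
  have sub : (<<map ext2f bd_quot>> <= ext2f @: boundaries2 br)%VS.
    by rewrite -limg_span; apply/limgS/span_subvP/allP; rewrite /= !d3_mem.
  by have := dimvS sub; rewrite (eqnP free_ext2f_bd_quot).
by rewrite -(limg_ker_dim ext2f (boundaries2 br)) (leq_add kerB imgB).
Qed.

End Lifts.
End QuotientL58A2.

Theorem lemma2p9 (F : closedFieldType) (hF : 2 \notin [pchar F]) :
  forall (V : vectType F) (br : V -> V -> V),
    is_lie_bracket br ->
    nilpotentL br ->
    \dim (derivedL br) = 3%N ->
    \dim (centerL br) = 1%N ->
    s_inv br = 5 ->
    ~ quot_center_iso_L58A2 br.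
Proof.
move=> V br lie_br _ dim_derived dim_center s5 [f [lin_f f_surj f_ker f_br]].
pose fl : {linear V -> 'rV[F]_7} := HB.pack f (GRing.isLinear.Build _ _ _ _ f lin_f).
have [xl f_xl] : exists xl : nat -> V, forall p, fl (xl p) = e7 F p.
  have lift p : exists x, fl x == e7 F p by have [x <-] := f_surj (e7 F p); exists x.
  by exists (fun p => xchoose (lift p)) => p; apply/eqP/(xchooseP (lift p)).
have n8 : dimL V = 8%N := dimL_eq8 (f := fl) f_surj f_ker dim_center.
have := schur_dim_le lie_br; have := dim_wedge2 V.
have := dim_boundaries_ge9 lie_br (f := fl) f_ker f_br f_xl.
move: s5; rewrite /s_inv dim_derived.
move: (schur_dim br) (\dim (wedge2 V)) (\dim (boundaries2 br)) => s w bd.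
by rewrite n8 bin2 /=; lia.
Qed.
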